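(* Let $(G_1,v_1)$ and $(G_2,v_2)$ be connected graphs with distinguished vertices whose path metrics are conditionally strictly negative definite. Then the path metric on the free product graph $G_1\ast G_2$ is conditionally strictly negative definite.
   Context: For rooted graphs $G_i=(V_i,E_i)$ with roots $v_i$ ($i=1,2$), the free product $G_1\ast G_2$ has vertex set consisting of the empty word $e$ and all words $s_1s_2\cdots s_m$ ($m\geq1$) with $s_k\in V_{i_k}\setminus\{v_{i_k}\}$ and $i_k\neq i_{k+1}$ for all $k$. Its edges are the pairs $\{wu,w'u\}$ where $\{w,w'\}\in E_i$ for some $i$, $u$ is such a word (possibly empty) whose first letter does not lie in $V_i$, and where $wu$ (resp. $w'u$) is read as $u$ if $w=v_i$ (resp. $w'=v_i$). The path metric of a connected graph is the shortest-path distance on its vertex set. A symmetric real function $K$ on $V\times V$ is conditionally strictly negative definite if for every finitely supported $\lambda\colon V\to\mathbb{C}$, $\lambda\neq0$, with $\sum_v\lambda(v)=0$ one has $\sum_{x,y}\lambda(x)\overline{\lambda(y)}K(x,y)<0$. *)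

From Stdlib Require Import Reals List ClassicalEpsilon.
From Coquelicot Require Import Coquelicot.
Import ListNotations.
Open Scope R_scope.

Definition symmetric_rel {V : Type} (adj : V -> V -> Prop) : Prop :=
  forall x y, adj x y -> adj y x.

Inductive walk {V : Type} (adj : V -> V -> Prop) : V -> V -> nat -> Prop :=
  | walk_nil : forall x, walk adj x x 0
  | walk_cons : forall x y z n, adj x y -> walk adj y z n -> walk adj x z (S n).

Definition connected {V : Type} (adj : V -> V -> Prop) : Prop :=
  forall x y, exists n, walk adj x y n.

Definition is_dist {V : Type} (adj : V -> V -> Prop) (x y : V) (d : nat) : Prop :=
  walk adj x y d /\ forall m, walk adj x y m -> (d <= m)%nat.

Definition path_metric {V : Type} (adj : V -> V -> Prop) (x y : V) : R :=
  INR (epsilon (inhabits 0%nat) (is_dist adj x y)).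

Definition csum {V : Type} (s : list V) (f : V -> C) : C :=
  fold_right (fun v acc => Cplus (f v) acc) (RtoC 0) s.

Definition cond_strict_neg_def {V : Type} (K : V -> V -> R) : Prop :=
  (forall x y, K x y = K y x) /\
  forall (lam : V -> C) (s : list V),
    NoDup s ->
    (forall v, ~ In v s -> lam v = RtoC 0) ->
    (exists v, lam v <> RtoC 0) ->
    csum s lam = RtoC 0 ->
    exists r : R, r < 0 /\
      csum s (fun x => csum s (fun y => Cmult (Cmult (lam x) (Cconj (lam y))) (RtoC (K x y))))
      = RtoC r.

Section FreeProduct.
Context {V1 V2 : Type} (adj1 : V1 -> V1 -> Prop) (adj2 : V2 -> V2 -> Prop)
        (v1 : V1) (v2 : V2).

Definition letter_ok (a : V1 + V2) : Prop :=
  match a with inl x => x <> v1 | inr y => y <> v2 end.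

Definition same_side (a b : V1 + V2) : Prop :=
  match a, b with
  | inl _, inl _ => True
  | inr _, inr _ => True
  | _, _ => False
  end.

Definition reduced (w : list (V1 + V2)) : Prop :=
  List.Forall letter_ok w /\
  forall k a b, nth_error w k = Some a -> nth_error w (S k) = Some b -> ~ same_side a b.

Definition fp_vertex : Type := { w : list (V1 + V2) | reduced w }.

Definition no_head_left (u : list (V1 + V2)) : Prop :=
  match u with inl _ :: _ => False | _ => True end.
Definition no_head_right (u : list (V1 + V2)) : Prop :=
  match u with inr _ :: _ => False | _ => True end.

Definition prepend_left (w : V1) (u x : list (V1 + V2)) : Prop :=
  (w = v1 /\ x = u) \/ (w <> v1 /\ x = inl w :: u).
Definition prepend_right (w : V2) (u x : list (V1 + V2)) : Prop :=
  (w = v2 /\ x = u) \/ (w <> v2 /\ x = inr w :: u).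

Definition fp_adj (x y : fp_vertex) : Prop :=
  (exists (w w' : V1) (u : list (V1 + V2)),
      adj1 w w' /\ reduced u /\ no_head_left u /\
      prepend_left w u (proj1_sig x) /\ prepend_left w' u (proj1_sig y)) \/
  (exists (w w' : V2) (u : list (V1 + V2)),
      adj2 w w' /\ reduced u /\ no_head_right u /\
      prepend_right w u (proj1_sig x) /\ prepend_right w' u (proj1_sig y)).

End FreeProduct.

(* Read from the root, the words of G1 * G2 form a tree of copies of G1 and G2:
   the distance between two words is the distance, inside one factor, between
   their first differing letters plus the heights (distances to the root) of
   all later letters.  On weights of total mass zero the height terms drop out,
   and splitting the weights according to the first letter writes the
   quadratic form of the path metric as the forms of the projections to G1 and
   G2 plus, for each first letter, the form of the weights on the remaining
   tails, recentred at the empty word.  Induction on the word length gives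
   negativity; equality forces every projection and every branch to vanish,
   hence the weights themselves. *)

From Stdlib Require Import Reals List ClassicalEpsilon.
From Coquelicot Require Import Coquelicot.
From Stdlib Require Import Classical Lia Lra FunctionalExtensionality.
Import ListNotations.
Open Scope R_scope.

Section GraphDistance.
Variables (V : Type) (adj : V -> V -> Prop).

Lemma walk_app x y z n k : walk adj x y n -> walk adj y z k -> walk adj x z (n + k).
Proof. induction 1; intros; simpl; auto. econstructor; eauto. Qed.

Lemma walk_one x y : adj x y -> walk adj x y 1.
Proof. intro; econstructor; eauto; constructor. Qed.

Lemma walk_rev : symmetric_rel adj -> forall x y n, walk adj x y n -> walk adj y x n.
Proof.
  intros sym x y n; induction 1; [constructor|].
  rewrite <- Nat.add_1_r. eapply walk_app; eauto. apply walk_one, sym; auto.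
Qed.

Definition gdist (x y : V) : nat := epsilon (inhabits 0%nat) (is_dist adj x y).

Lemma path_metric_gdist x y : path_metric adj x y = INR (gdist x y).
Proof. reflexivity. Qed.

Lemma is_dist_exists x y n : walk adj x y n -> exists d, is_dist adj x y d.
Proof.
  induction n as [n IH] using (well_founded_induction Wf_nat.lt_wf); intro Wn.
  destruct (classic (forall m, walk adj x y m -> (n <= m)%nat)) as [Hmin|Hmin].
  - exists n; split; auto.
  - apply not_all_ex_not in Hmin as [m Hm]. apply imply_to_and in Hm as [Wm Hm].
    apply (IH m); auto; lia.
Qed.

Lemma is_dist_unique x y a b : is_dist adj x y a -> is_dist adj x y b -> a = b.
Proof. intros [Wa Ha] [Wb Hb]. specialize (Ha _ Wb); specialize (Hb _ Wa); lia. Qed.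

Lemma gdist_unique x y d : is_dist adj x y d -> gdist x y = d.
Proof. intro Hd. apply (is_dist_unique x y); auto. unfold gdist; apply epsilon_spec; eauto. Qed.

Hypotheses (sym : symmetric_rel adj) (conn : connected adj).

Lemma gdist_spec x y : is_dist adj x y (gdist x y).
Proof.
  destruct (conn x y) as [n Wn]. unfold gdist; apply epsilon_spec. eapply is_dist_exists; eauto.
Qed.

Lemma gdist_walk x y : walk adj x y (gdist x y).
Proof. apply gdist_spec. Qed.

Lemma gdist_min x y n : walk adj x y n -> (gdist x y <= n)%nat.
Proof. apply gdist_spec. Qed.

Lemma gdist_refl x : gdist x x = 0%nat.
Proof. pose proof (gdist_min x x 0 (walk_nil _ x)); lia. Qed.

Lemma gdist_sym x y : gdist x y = gdist y x.
Proof.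
  pose proof (gdist_min y x _ (walk_rev sym _ _ _ (gdist_walk x y))).
  pose proof (gdist_min x y _ (walk_rev sym _ _ _ (gdist_walk y x))). lia.
Qed.

Lemma gdist_triangle x y z : (gdist x z <= gdist x y + gdist y z)%nat.
Proof. apply gdist_min, walk_app with y; apply gdist_walk. Qed.

Lemma gdist_adj x y : adj x y -> (gdist x y <= 1)%nat.
Proof. intro; apply gdist_min, walk_one; auto. Qed.

End GraphDistance.

Arguments gdist {V}.
Arguments path_metric_gdist {V adj}.
Arguments gdist_refl {V adj}.
Arguments gdist_sym {V adj}.
Arguments gdist_triangle {V adj}.
Arguments gdist_walk {V adj}.
Arguments gdist_adj {V adj}.

Definition lsum {A} (l : list A) (f : A -> R) : R := fold_right (fun a acc => f a + acc) 0 l.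

Lemma lsum_cons {A} a l (f : A -> R) : lsum (a :: l) f = f a + lsum l f.
Proof. reflexivity. Qed.

Lemma lsum_ext_in {A} (l : list A) f g : (forall a, In a l -> f a = g a) -> lsum l f = lsum l g.
Proof. induction l; simpl; intros E; auto. rewrite E, IHl; auto. Qed.

Lemma lsum_ext {A} (l : list A) f g : (forall a, f a = g a) -> lsum l f = lsum l g.
Proof. intros; apply lsum_ext_in; auto. Qed.

Lemma lsum_0 {A} (l : list A) f : (forall a, In a l -> f a = 0) -> lsum l f = 0.
Proof. induction l; simpl; intros E; auto. rewrite E, IHl; auto; lra. Qed.

Lemma lsum_add {A} (l : list A) f g : lsum l (fun a => f a + g a) = lsum l f + lsum l g.
Proof. induction l; simpl; [lra|]. rewrite IHl; lra. Qed.

Lemma lsum_mull {A} (l : list A) c f : lsum l (fun a => c * f a) = c * lsum l f.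
Proof. induction l; simpl; [lra|]. rewrite IHl; lra. Qed.

Lemma lsum_opp {A} (l : list A) f : lsum l (fun a => - f a) = - lsum l f.
Proof. induction l; simpl; [lra|]. rewrite IHl; lra. Qed.

Lemma lsum_map {A B} (l : list A) (g : A -> B) f : lsum (map g l) f = lsum l (fun a => f (g a)).
Proof. induction l; simpl; auto. rewrite IHl; auto. Qed.

Lemma lsum_exchange {A B} (l : list A) (k : list B) f :
  lsum l (fun a => lsum k (f a)) = lsum k (fun b => lsum l (fun a => f a b)).
Proof.
  induction l; simpl. { symmetry; apply lsum_0; auto. }
  rewrite IHl, <- lsum_add. reflexivity.
Qed.

Lemma lsum_mul {A B} (l : list A) (k : list B) f g :
  lsum l (fun a => lsum k (fun b => f a * g b)) = lsum l f * lsum k g.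
Proof.
  induction l; simpl; [lra|]. rewrite IHl, lsum_mull. lra.
Qed.

Lemma lsum_nonpos {A} (l : list A) f : (forall a, In a l -> f a <= 0) -> lsum l f <= 0.
Proof.
  induction l; simpl; intros H; [lra|].
  pose proof (H a (or_introl eq_refl)). pose proof (IHl (fun b Hb => H b (or_intror Hb))). lra.
Qed.

Lemma lsum_nonpos_eq0 {A} (l : list A) f : (forall a, In a l -> f a <= 0) -> lsum l f = 0 ->
  forall a, In a l -> f a = 0.
Proof.
  induction l as [|b l IH]; simpl; intros H E a Ha; [contradiction|].
  pose proof (H b (or_introl eq_refl)).
  pose proof (lsum_nonpos l f (fun c Hc => H c (or_intror Hc))).
  destruct Ha as [<-|Ha]; [lra|]. apply IH; auto; lra.
Qed.

Definition classic_eq_dec {X} (x y : X) : {x = y} + {x <> y} := excluded_middle_informative (x = y).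

Lemma lsum_indicator {A} (l : list A) (y : A) (g : A -> R) : NoDup l -> In y l ->
  lsum l (fun a => if classic_eq_dec a y then g a else 0) = g y.
Proof.
  induction 1 as [|x l Hx Nl IH]; simpl; intros Hy; [contradiction|].
  destruct (classic_eq_dec x y) as [<-|Nxy].
  - rewrite lsum_0; [lra|]. intros a Ha. destruct (classic_eq_dec a x); subst; tauto.
  - destruct Hy as [->|Hy]; [congruence|]. rewrite IH; auto; lra.
Qed.

Lemma lsum_antisym {A} (l : list A) f : (forall a b, f a b = - f b a) ->
  lsum l (fun a => lsum l (f a)) = 0.
Proof.
  intro Hf. set (S := lsum l (fun a => lsum l (f a))).
  assert (E : S = - S).
  { unfold S. rewrite lsum_exchange at 1. rewrite <- lsum_opp. apply lsum_ext; intro b.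
    rewrite <- lsum_opp. apply lsum_ext; intro a. apply Hf. }
  lra.
Qed.

(* Finitely supported real weights are lists of (point, weight) pairs, points
   possibly repeated; [density] adds up the weights sitting at one point. *)
Definition mass {X} (m : list (X * R)) : R := lsum m snd.

Definition qform {X} (K : X -> X -> R) (m : list (X * R)) : R :=
  lsum m (fun p => lsum m (fun q => snd p * snd q * K (fst p) (fst q))).

Definition density {X} (m : list (X * R)) (v : X) : R :=
  lsum m (fun p => if classic_eq_dec (fst p) v then snd p else 0).

Definition null_weights {X} (m : list (X * R)) : Prop := forall v, density m v = 0.

Definition support {X} (m : list (X * R)) : list X := nodup classic_eq_dec (map fst m).

Definition neg_def_at {X} (K : X -> X -> R) (m : list (X * R)) : Prop :=
  qform K m <= 0 /\ (qform K m = 0 -> null_weights m).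

Definition neg_def_on {X} (P : X -> Prop) (K : X -> X -> R) : Prop :=
  forall m : list (X * R), (forall p, In p m -> P (fst p)) -> mass m = 0 -> neg_def_at K m.

Lemma density_notin {X} (m : list (X * R)) v : ~ In v (map fst m) -> density m v = 0.
Proof.
  intro Hv. apply lsum_0; intros p Hp. destruct (classic_eq_dec (fst p) v) as [<-|]; auto.
  exfalso; apply Hv, in_map; auto.
Qed.

Lemma support_NoDup {X} (m : list (X * R)) : NoDup (support m).
Proof. apply NoDup_nodup. Qed.

Lemma in_support {X} (m : list (X * R)) p : In p m -> In (fst p) (support m).
Proof. intro; apply nodup_In, in_map; auto. Qed.

Lemma lsum_weights_density {X} (m : list (X * R)) (s : list X) (f : X -> R) :
  NoDup s -> (forall p, In p m -> In (fst p) s) ->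
  lsum m (fun p => snd p * f (fst p)) = lsum s (fun w => density m w * f w).
Proof.
  intros Ns. induction m as [|p m IH]; intros Hm.
  - symmetry; apply lsum_0; intros; unfold density; simpl; lra.
  - rewrite lsum_cons, IH by (intros; apply Hm; simpl; auto).
    unfold density; simpl. symmetry.
    rewrite (lsum_ext s _ (fun w => (if classic_eq_dec w (fst p) then snd p * f w else 0) +
       lsum m (fun q => if classic_eq_dec (fst q) w then snd q else 0) * f w)).
    + rewrite lsum_add, lsum_indicator; [reflexivity|auto|apply Hm; simpl; auto].
    + intro w. destruct (classic_eq_dec (fst p) w), (classic_eq_dec w (fst p));
        subst; try congruence; lra.
Qed.

Lemma mass_density {X} (m : list (X * R)) : mass m = lsum (support m) (density m).
Proof.
  transitivity (lsum m (fun p => snd p * 1)).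
  { apply lsum_ext; intro; lra. }
  rewrite (lsum_weights_density m (support m) (fun _ => 1));
    [|apply support_NoDup|apply in_support].
  apply lsum_ext; intro; lra.
Qed.

Lemma qform_density {X} K (m : list (X * R)) : qform K m =
  lsum (support m) (fun v => lsum (support m) (fun w => density m v * density m w * K v w)).
Proof.
  assert (Hs := @in_support X m). assert (Ns := support_NoDup m). unfold qform.
  transitivity (lsum m (fun p => snd p * lsum (support m) (fun w => density m w * K (fst p) w))).
  - apply lsum_ext; intro p. rewrite <- (lsum_weights_density m (support m) (K (fst p))); auto.
    rewrite <- lsum_mull. apply lsum_ext; intro; lra.
  - rewrite (lsum_weights_density m (support m)
      (fun v => lsum (support m) (fun w => density m w * K v w))); auto.
    apply lsum_ext; intro v. rewrite <- lsum_mull. apply lsum_ext; intro; lra.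
Qed.

Lemma qform_ext_in {X} (K K' : X -> X -> R) m :
  (forall p q, In p m -> In q m -> K (fst p) (fst q) = K' (fst p) (fst q)) ->
  qform K m = qform K' m.
Proof.
  intro E. apply lsum_ext_in; intros p Hp. apply lsum_ext_in; intros q Hq. rewrite E; auto.
Qed.

Lemma qform_add {X} (K K' : X -> X -> R) m :
  qform (fun x y => K x y + K' x y) m = qform K m + qform K' m.
Proof.
  unfold qform. rewrite <- lsum_add. apply lsum_ext; intro p.
  rewrite <- lsum_add. apply lsum_ext; intro q. ring.
Qed.

Lemma qform_add_potential {X} (K : X -> X -> R) (g : X -> R) m : mass m = 0 ->
  qform (fun x y => K x y + g x + g y) m = qform K m.
Proof.
  intro Hm. rewrite !qform_add. unfold qform at 2 3.
  rewrite (lsum_ext m _ (fun p => lsum m (fun q => (snd p * g (fst p)) * snd q))),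
    (lsum_ext m (fun p => lsum m (fun q => _ * g (fst q)))
      (fun p => lsum m (fun q => snd p * (snd q * g (fst q))))),
    !lsum_mul.
  - fold (mass m). rewrite Hm. ring.
  - intro p. apply lsum_ext; intro q. ring.
  - intro p. apply lsum_ext; intro q. ring.
Qed.

Lemma qform_cons_zero {X} (K : X -> X -> R) x c m :
  (forall y, K x y = 0) -> (forall y, K y x = 0) -> qform K ((x, c) :: m) = qform K m.
Proof.
  intros Kx Kx'. unfold qform. rewrite !lsum_cons. simpl. rewrite Kx, lsum_0.
  - rewrite (lsum_ext m (fun p => _ + _)
      (fun p => lsum m (fun q => snd p * snd q * K (fst p) (fst q)))).
    + ring.
    + intro p. rewrite Kx'. ring.
  - intros q _. rewrite Kx. ring.
Qed.

Lemma qform_lsum_kernel {X A} (L : list A) (K : A -> X -> X -> R) m :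
  qform (fun x y => lsum L (fun a => K a x y)) m = lsum L (fun a => qform (K a) m).
Proof.
  unfold qform. symmetry. rewrite lsum_exchange. apply lsum_ext; intro p.
  rewrite lsum_exchange. apply lsum_ext; intro q. rewrite <- lsum_mull. reflexivity.
Qed.

Lemma density_graph {X} (s : list X) (c : X -> R) v : NoDup s -> In v s ->
  density (map (fun x => (x, c x)) s) v = c v.
Proof. intros. unfold density. rewrite lsum_map. apply lsum_indicator; auto. Qed.

Lemma qform_graph {X} K (s : list X) (c : X -> R) :
  qform K (map (fun x => (x, c x)) s) = lsum s (fun x => lsum s (fun y => c x * c y * K x y)).
Proof.
  unfold qform. rewrite lsum_map. apply lsum_ext; intro. rewrite lsum_map. reflexivity.
Qed.

Definition map_points {X Y} (f : Y -> X) (m : list (Y * R)) : list (X * R) :=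
  map (fun p => (f (fst p), snd p)) m.

Lemma mass_map_points {X Y} (f : Y -> X) m : mass (map_points f m) = mass m.
Proof. unfold mass, map_points. rewrite lsum_map. reflexivity. Qed.

Lemma qform_map_points {X Y} (f : Y -> X) K m :
  qform K (map_points f m) = qform (fun x y => K (f x) (f y)) m.
Proof.
  unfold qform, map_points. rewrite lsum_map. apply lsum_ext; intro. rewrite lsum_map. reflexivity.
Qed.

Lemma density_map_points {X Y} (f : Y -> X) m v : (forall x y, f x = f y -> x = y) ->
  density (map_points f m) (f v) = density m v.
Proof.
  intro inj. unfold density, map_points. rewrite lsum_map. apply lsum_ext; intro p; simpl.
  destruct (classic_eq_dec (f (fst p)) (f v)) as [E|N], (classic_eq_dec (fst p) v);
    subst; auto; [apply inj in E|]; congruence.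
Qed.

Lemma neg_def_on_comap {X Y} (P : X -> Prop) K (f : Y -> X) :
  (forall x y, f x = f y -> x = y) -> (forall y, P (f y)) -> neg_def_on P K ->
  neg_def_on (fun _ => True) (fun x y => K (f x) (f y)).
Proof.
  intros inj Pf HK m _ Hm. red. rewrite <- qform_map_points.
  destruct (HK (map_points f m)) as [Hle Heq].
  - intros p Hp. apply in_map_iff in Hp as [q [<- _]]. apply Pf.
  - rewrite mass_map_points; auto.
  - split; auto. intros E v. rewrite <- (density_map_points f m v inj). apply Heq; auto.
Qed.

Lemma csum_fst {X} (s : list X) f : fst (csum s f) = lsum s (fun x => fst (f x)).
Proof. induction s; simpl; auto. rewrite IHs; auto. Qed.

Lemma csum_snd {X} (s : list X) f : snd (csum s f) = lsum s (fun x => snd (f x)).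
Proof. induction s; simpl; auto. rewrite IHs; auto. Qed.

Lemma cond_strict_neg_def_neg_def {X} (K : X -> X -> R) :
  cond_strict_neg_def K -> neg_def_on (fun _ => True) K.
Proof.
  intros [_ HK] m _ Hm. red. rewrite qform_density.
  destruct (classic (null_weights m)) as [Z|Z].
  - rewrite lsum_0; [split; auto; lra|]. intros v _.
    apply lsum_0; intros w _. rewrite Z; ring.
  - apply not_all_ex_not in Z as [v0 Hv0].
    destruct (HK (fun v => RtoC (density m v)) (support m) (support_NoDup m)) as [r [Hr E]].
    + intros v Hv. unfold RtoC. f_equal. apply density_notin.
      intro Hin. apply Hv, nodup_In; auto.
    + exists v0. intro E. apply Hv0. unfold RtoC in E. congruence.
    + apply injective_projections; rewrite ?csum_fst, ?csum_snd; simpl.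
      * rewrite <- mass_density; auto.
      * apply lsum_0; auto.
    + apply (f_equal fst) in E. rewrite csum_fst in E; simpl in E.
      replace (lsum _ _) with r; [split; intros; lra|].
      rewrite <- E. apply lsum_ext; intro v. rewrite csum_fst.
      apply lsum_ext; intro w. simpl. ring.
Qed.

Lemma neg_def_cond_strict_neg_def {X} (K : X -> X -> R) :
  (forall x y, K x y = K y x) -> neg_def_on (fun _ => True) K -> cond_strict_neg_def K.
Proof.
  intros Ksym HK. split; auto. intros lam s Ns Hout [v Hv] Hsum.
  set (mre := map (fun x => (x, fst (lam x))) s).
  set (mim := map (fun x => (x, snd (lam x))) s).
  assert (Mre : mass mre = 0).
  { unfold mass, mre. rewrite lsum_map; simpl. rewrite <- csum_fst, Hsum. reflexivity. }
  assert (Mim : mass mim = 0).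
  { unfold mass, mim. rewrite lsum_map; simpl. rewrite <- csum_snd, Hsum. reflexivity. }
  destruct (HK mre (fun _ _ => I) Mre) as [Hre Zre].
  destruct (HK mim (fun _ _ => I) Mim) as [Him Zim].
  exists (qform K mre + qform K mim). split.
  - assert (Iv : In v s) by (apply NNPP; intro C; apply Hv, Hout, C).
    destruct (Rlt_or_le (qform K mre + qform K mim) 0) as [|Hge]; auto. exfalso.
    assert (Re0 := Zre ltac:(lra) v). assert (Im0 := Zim ltac:(lra) v).
    unfold mre, mim in *. rewrite density_graph in Re0, Im0 by auto.
    apply Hv. rewrite (surjective_pairing (lam v)), Re0, Im0. reflexivity.
  - unfold mre, mim. rewrite !qform_graph.
    apply injective_projections; rewrite csum_fst || rewrite csum_snd; simpl.
    + rewrite <- lsum_add. apply lsum_ext; intro x. rewrite csum_fst, <- lsum_add.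
      apply lsum_ext; intro y. simpl. ring.
    + rewrite (lsum_ext s _ (fun x => lsum s (fun y =>
        (snd (lam x) * fst (lam y) - fst (lam x) * snd (lam y)) * K x y))).
      * rewrite lsum_antisym; auto. intros x y. rewrite (Ksym y x). ring.
      * intro x. rewrite csum_snd. apply lsum_ext; intro y. simpl. ring.
Qed.

Section FreeProduct.
Variables (V1 V2 : Type) (adj1 : V1 -> V1 -> Prop) (adj2 : V2 -> V2 -> Prop) (v1 : V1) (v2 : V2).
Hypotheses (sym1 : symmetric_rel adj1) (sym2 : symmetric_rel adj2)
  (conn1 : connected adj1) (conn2 : connected adj2).

Notation letter := (V1 + V2)%type.
Notation d1 := (gdist adj1).
Notation d2 := (gdist adj2).
Notation fp_edge := (fp_adj adj1 adj2 v1 v2).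

Definition letter_height (a : letter) : nat :=
  match a with inl w => d1 w v1 | inr z => d2 z v2 end.

Definition height (r : list letter) : nat :=
  fold_right (fun a n => letter_height a + n)%nat 0%nat r.

Definition letter_dist (a b : letter) : nat :=
  match a, b with
  | inl w, inl w' => d1 w w'
  | inr z, inr z' => d2 z z'
  | _, _ => letter_height a + letter_height b
  end.

(* Distance between words written root-first, i.e. in the reverse order of
   [fp_vertex]: for [x = p ++ a :: t] and [y = p ++ b :: t'] with [a <> b] it
   is [letter_dist a b + height t + height t']. *)
Fixpoint word_dist (r r' : list letter) : nat :=
  match r, r' with
  | [], _ => height r'
  | _, [] => height r
  | a :: t, b :: t' =>
      if classic_eq_dec a b then word_dist t t' else letter_dist a b + height t + height t'
  end.

Lemma word_dist_nil_r r : word_dist r [] = height r.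
Proof. destruct r; reflexivity. Qed.

Lemma word_dist_app p r r' : word_dist (p ++ r) (p ++ r') = word_dist r r'.
Proof. induction p as [|a p IH]; simpl; auto. destruct (classic_eq_dec a a); tauto. Qed.

Lemma word_dist_refl r : word_dist r r = 0%nat.
Proof. rewrite <- (app_nil_r r) at 1 2. rewrite word_dist_app. reflexivity. Qed.

Lemma height_app r r' : height (r ++ r') = (height r + height r')%nat.
Proof. induction r; simpl; lia. Qed.

Lemma height_rev r : height (rev r) = height r.
Proof. induction r; simpl; rewrite ?height_app; simpl; lia. Qed.

Lemma letter_height_le a b :
  (letter_height a <= letter_dist a b + letter_height b)%nat.
Proof.
  destruct a as [w|z], b as [w'|z']; simpl; try lia; apply gdist_triangle; auto.
Qed.

Lemma letter_dist_le a b : (letter_dist a b <= letter_height a + letter_height b)%nat.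
Proof.
  destruct a as [w|z], b as [w'|z']; simpl; auto.
  - rewrite (gdist_sym sym1 conn1 w' v1). apply gdist_triangle; auto.
  - rewrite (gdist_sym sym2 conn2 z' v2). apply gdist_triangle; auto.
Qed.

Lemma letter_dist_sym a b : letter_dist a b = letter_dist b a.
Proof.
  destruct a, b; simpl; try lia; apply gdist_sym; auto.
Qed.

Lemma letter_dist_triangle a b c : (letter_dist a c <= letter_dist a b + letter_dist b c)%nat.
Proof.
  pose proof (letter_dist_le a c) as Hac.
  pose proof (letter_height_le a b) as Hab. pose proof (letter_height_le c b) as Hcb.
  rewrite (letter_dist_sym c b) in Hcb.
  destruct a as [a|a], b as [b|b], c as [c|c]; simpl in *; try lia; apply gdist_triangle; auto.
Qed.

Lemma word_dist_sym r r' : word_dist r r' = word_dist r' r.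
Proof.
  revert r'; induction r as [|a t IH]; intros [|b t']; simpl; auto.
  destruct (classic_eq_dec a b), (classic_eq_dec b a); subst; try congruence.
  rewrite letter_dist_sym. lia.
Qed.

Lemma height_le_word_dist r r' : (height r <= word_dist r r' + height r')%nat.
Proof.
  revert r'; induction r as [|a t IH]; intros [|b t']; simpl; try lia.
  destruct (classic_eq_dec a b) as [<-|_].
  - specialize (IH t'); lia.
  - pose proof (letter_height_le a b); lia.
Qed.

Lemma word_dist_le_height r r' : (word_dist r r' <= height r + height r')%nat.
Proof.
  revert r'; induction r as [|a t IH]; intros [|b t']; simpl; try lia.
  destruct (classic_eq_dec a b) as [<-|_].
  - specialize (IH t'); lia.
  - pose proof (letter_dist_le a b); lia.
Qed.

Lemma word_dist_triangle x y z : (word_dist x z <= word_dist x y + word_dist y z)%nat.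
Proof.
  revert y z; induction x as [|a t IH]; intros y z.
  - pose proof (height_le_word_dist z y). rewrite (word_dist_sym z y) in *. simpl. lia.
  - destruct y as [|b t'].
    + pose proof (word_dist_le_height (a :: t) z). simpl (word_dist [] z).
      rewrite word_dist_nil_r. lia.
    + destruct z as [|c t''].
      * rewrite !word_dist_nil_r. pose proof (height_le_word_dist (a :: t) (b :: t')). lia.
      * simpl. destruct (classic_eq_dec a b), (classic_eq_dec b c), (classic_eq_dec a c);
          subst; try congruence.
        -- apply IH.
        -- pose proof (height_le_word_dist t t'); lia.
        -- pose proof (height_le_word_dist t'' t'); rewrite (word_dist_sym t'' t') in *; lia.
        -- pose proof (word_dist_le_height t t''); lia.
        -- pose proof (letter_dist_triangle a b c); lia.
Qed.

Definition first_left (r : list letter) : V1 := match r with inl w :: _ => w | _ => v1 end.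
Definition first_right (r : list letter) : V2 := match r with inr z :: _ => z | _ => v2 end.

Definition head_ind (a : letter) (r : list letter) : R :=
  match r with b :: _ => if classic_eq_dec a b then 1 else 0 | [] => 0 end.

Definition word_kernel (r r' : list letter) : R := INR (word_dist r r').

(* [-2] times the Gromov product of [r] and [r'] based at the empty word. *)
Definition gromov_kernel (r r' : list letter) : R :=
  word_kernel r r' - INR (height r) - INR (height r').

Lemma gromov_kernel_nil_l r : gromov_kernel [] r = 0.
Proof. unfold gromov_kernel, word_kernel. simpl. lra. Qed.

Lemma gromov_kernel_nil_r r : gromov_kernel r [] = 0.
Proof. unfold gromov_kernel, word_kernel. rewrite word_dist_nil_r. simpl. lra. Qed.

Lemma lsum_head_ind L x y c : NoDup L -> (forall b t, x = b :: t -> In b L) ->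
  lsum L (fun a => head_ind a x * head_ind a y * c) =
  match x, y with b :: _, b' :: _ => if classic_eq_dec b b' then c else 0 | _, _ => 0 end.
Proof.
  intros NL HL. destruct x as [|b t]; [apply lsum_0; intros; simpl; ring|].
  destruct y as [|b' t']; [apply lsum_0; intros; simpl; ring|].
  destruct (classic_eq_dec b b') as [<-|Nb].
  - transitivity (lsum L (fun a => if classic_eq_dec a b then c else 0)).
    + apply lsum_ext; intro a; simpl. destruct (classic_eq_dec a b); ring.
    + apply (lsum_indicator L b (fun _ => c)); eauto.
  - apply lsum_0; intros a _; simpl.
    destruct (classic_eq_dec a b), (classic_eq_dec a b'); subst; try congruence; ring.
Qed.

Lemma word_kernel_decomp L x y : NoDup L -> (forall b t, x = b :: t -> In b L) ->
  word_kernel x y =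
    path_metric adj1 (first_left x) (first_left y)
    + path_metric adj2 (first_right x) (first_right y)
    + lsum L (fun a => head_ind a x * head_ind a y * gromov_kernel (tl x) (tl y))
    + INR (height (tl x)) + INR (height (tl y)).
Proof.
  intros NL HL. rewrite lsum_head_ind by auto. rewrite !path_metric_gdist.
  unfold gromov_kernel, word_kernel.
  assert (R1 := gdist_refl conn1). assert (R2 := gdist_refl conn2).
  destruct x as [|[w|z] t], y as [|[w'|z'] t']; simpl;
    try destruct (classic_eq_dec _ _) as [E|N]; try (inversion E; subst; clear E);
    rewrite ?R1, ?R2, ?plus_INR; simpl;
    rewrite ?(gdist_sym sym1 conn1 v1), ?(gdist_sym sym2 conn2 v2); simpl; lra.
Qed.

Definition heads (m : list (list letter * R)) : list letter :=
  nodup classic_eq_dec (flat_map (fun p => firstn 1 (fst p)) m).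

Definition branch (a : letter) (m : list (list letter * R)) : list (list letter * R) :=
  map (fun p => (tl (fst p), head_ind a (fst p) * snd p)) m.

Definition centered_branch (a : letter) (m : list (list letter * R)) : list (list letter * R) :=
  ([], - mass (branch a m)) :: branch a m.

Lemma in_heads m b : In b (heads m) <-> exists p t, In p m /\ fst p = b :: t.
Proof.
  unfold heads. rewrite nodup_In, in_flat_map. split.
  - intros [p [Hp Hb]]. destruct (fst p) as [|c t] eqn:E; simpl in Hb; [contradiction|].
    destruct Hb as [<-|[]]. exists p, t; auto.
  - intros [p [t [Hp E]]]. exists p. rewrite E. simpl; auto.
Qed.

Lemma mass_branch a m : mass (branch a m) = lsum m (fun p => head_ind a (fst p) * snd p).
Proof. unfold mass, branch. rewrite lsum_map. reflexivity. Qed.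

Lemma mass_centered_branch a m : mass (centered_branch a m) = 0.
Proof.
  unfold mass at 1, centered_branch. rewrite lsum_cons. simpl. fold (mass (branch a m)). lra.
Qed.

Lemma qform_centered_branch a m : qform word_kernel (centered_branch a m) =
  qform (fun x y => head_ind a x * head_ind a y * gromov_kernel (tl x) (tl y)) m.
Proof.
  rewrite (qform_ext_in word_kernel
    (fun x y => gromov_kernel x y + INR (height x) + INR (height y)))
    by (intros; unfold gromov_kernel; lra).
  rewrite qform_add_potential by apply mass_centered_branch.
  unfold centered_branch.
  rewrite qform_cons_zero by (apply gromov_kernel_nil_l || apply gromov_kernel_nil_r).
  unfold qform, branch. rewrite lsum_map. apply lsum_ext; intro p.
  rewrite lsum_map. apply lsum_ext; intro q. simpl. ring.
Qed.

Lemma qform_word_kernel_decomp m : mass m = 0 ->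
  qform word_kernel m = qform (path_metric adj1) (map_points first_left m)
    + qform (path_metric adj2) (map_points first_right m)
    + lsum (heads m) (fun a => qform word_kernel (centered_branch a m)).
Proof.
  intro Hm.
  rewrite (qform_ext_in _ (fun x y =>
    path_metric adj1 (first_left x) (first_left y)
    + path_metric adj2 (first_right x) (first_right y)
    + lsum (heads m) (fun a => head_ind a x * head_ind a y * gromov_kernel (tl x) (tl y))
    + INR (height (tl x)) + INR (height (tl y)))).
  - rewrite (qform_add_potential _ (fun x => INR (height (tl x)))) by auto.
    rewrite !qform_add, qform_lsum_kernel, !qform_map_points.
    f_equal. apply lsum_ext; intro a. symmetry; apply qform_centered_branch.
  - intros p q Hp _. apply word_kernel_decomp; [apply NoDup_nodup|].
    intros b t E. apply in_heads. eauto.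
Qed.

Lemma mass_branch_left w m : w <> v1 ->
  mass (branch (inl w) m) = density (map_points first_left m) w.
Proof.
  intro Hw. rewrite mass_branch. unfold density, map_points. rewrite lsum_map.
  apply lsum_ext; intro p; simpl.
  destruct (fst p) as [|[w'|z'] t]; simpl;
    repeat destruct (classic_eq_dec _ _); subst; try congruence; ring.
Qed.

Lemma mass_branch_right z m : z <> v2 ->
  mass (branch (inr z) m) = density (map_points first_right m) z.
Proof.
  intro Hz. rewrite mass_branch. unfold density, map_points. rewrite lsum_map.
  apply lsum_ext; intro p; simpl.
  destruct (fst p) as [|[w'|z'] t]; simpl;
    repeat destruct (classic_eq_dec _ _); subst; try congruence; ring.
Qed.

Lemma mass_split_heads m : mass m = density m [] + lsum (heads m) (fun a => mass (branch a m)).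
Proof.
  rewrite (lsum_ext _ _ _ (fun a => mass_branch a m)), lsum_exchange.
  unfold density, mass. rewrite <- lsum_add. apply lsum_ext_in; intros p Hp.
  destruct (fst p) as [|b t] eqn:E; simpl.
  - rewrite lsum_0 by (intros; ring). destruct (classic_eq_dec _ _); [ring|congruence].
  - destruct (classic_eq_dec _ _); [congruence|].
    transitivity (lsum (heads m) (fun a => if classic_eq_dec a b then snd p else 0)).
    + rewrite lsum_indicator; [ring|apply NoDup_nodup|apply in_heads; eauto].
    + rewrite Rplus_0_l. apply lsum_ext; intro a. destruct (classic_eq_dec a b); ring.
Qed.

Lemma density_cons m b t : density m (b :: t) = density (branch b m) t.
Proof.
  unfold density, branch. rewrite lsum_map. apply lsum_ext; intro p; simpl.
  destruct (fst p) as [|c t']; simpl; repeat destruct (classic_eq_dec _ _);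
    subst; try congruence; try ring.
  all: match goal with E : _ :: _ = _ :: _ |- _ => injection E; intros; subst; congruence end.
Qed.

Lemma density_branch_notin b m t : ~ In b (heads m) -> density (branch b m) t = 0.
Proof.
  intro Hb. unfold density, branch. rewrite lsum_map. apply lsum_0; intros p Hp; simpl.
  destruct (fst p) as [|c t'] eqn:E; simpl; destruct (classic_eq_dec _ _); try ring.
  destruct (classic_eq_dec b c) as [<-|]; [|ring].
  exfalso; apply Hb, in_heads; eauto.
Qed.

Lemma density_centered_branch a m t : mass (branch a m) = 0 ->
  density (centered_branch a m) t = density (branch a m) t.
Proof.
  intro Hm. unfold density at 1, centered_branch. rewrite lsum_cons. simpl. rewrite Hm.
  fold (density (branch a m) t). destruct (classic_eq_dec _ _); ring.
Qed.

Hypotheses (neg1 : neg_def_on (fun _ => True) (path_metric adj1))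
  (neg2 : neg_def_on (fun _ => True) (path_metric adj2)).

Lemma branch_mass_zero m a :
  (forall p, In p m -> List.Forall (letter_ok v1 v2) (fst p)) ->
  null_weights (map_points first_left m) -> null_weights (map_points first_right m) ->
  In a (heads m) -> mass (branch a m) = 0.
Proof.
  intros OK N1 N2 Ha. apply in_heads in Ha as [p [t [Hp E]]].
  pose proof (OK p Hp) as Ok. rewrite E in Ok. apply List.Forall_inv in Ok.
  destruct a as [w|z]; simpl in Ok.
  - rewrite mass_branch_left; auto.
  - rewrite mass_branch_right; auto.
Qed.

Lemma word_kernel_neg_def_step m :
  (forall p, In p m -> List.Forall (letter_ok v1 v2) (fst p)) -> mass m = 0 ->
  (forall a, In a (heads m) -> neg_def_at word_kernel (centered_branch a m)) ->
  neg_def_at word_kernel m.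
Proof.
  intros OK Hm IH.
  destruct (neg1 (map_points first_left m)) as [Q1 Z1]; [auto|rewrite mass_map_points; auto|].
  destruct (neg2 (map_points first_right m)) as [Q2 Z2]; [auto|rewrite mass_map_points; auto|].
  assert (Qb := lsum_nonpos _ _ (fun a Ha => proj1 (IH a Ha))).
  red. rewrite qform_word_kernel_decomp by auto. split; [lra|]. intro E.
  assert (N1 : null_weights (map_points first_left m)) by (apply Z1; lra).
  assert (N2 : null_weights (map_points first_right m)) by (apply Z2; lra).
  assert (Nb := lsum_nonpos_eq0 _ _ (fun a Ha => proj1 (IH a Ha)) ltac:(lra)).
  assert (Mb := branch_mass_zero m).
  intros [|b t].
  - rewrite mass_split_heads, lsum_0 in Hm by (intros; apply Mb; auto). lra.
  - rewrite density_cons. destruct (classic (In b (heads m))) as [Hb|Hb].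
    + rewrite <- density_centered_branch by auto. apply (IH b Hb), Nb; auto.
    + apply density_branch_notin; auto.
Qed.

Lemma word_kernel_neg_def_bounded n :
  neg_def_on (fun r => (length r <= n)%nat /\ List.Forall (letter_ok v1 v2) r) word_kernel.
Proof.
  induction n as [|n IH]; intros m Hm Mm;
    apply word_kernel_neg_def_step; auto; try (intros; apply Hm; auto); intros a Ha;
    apply in_heads in Ha as [p [t [Hp E]]]; destruct (Hm p Hp) as [Hl Ok]; rewrite E in Hl, Ok.
  - simpl in Hl; lia.
  - apply IH; [|apply mass_centered_branch]. intros q [<-|Hq].
    + split; [simpl; lia|constructor].
    + apply in_map_iff in Hq as [q' [<- Hq']]. destruct (Hm q' Hq') as [Hl' Ok'].
      simpl. destruct (fst q') as [|c t']; simpl in *; split; try lia; auto.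
      inversion Ok'; auto.
Qed.

Lemma word_kernel_neg_def : neg_def_on (List.Forall (letter_ok v1 v2)) word_kernel.
Proof.
  intros m Hm. set (n := list_max (map (fun p => length (fst p)) m)).
  apply (word_kernel_neg_def_bounded n). intros p Hp. split; auto.
  assert (Fa := proj1 (list_max_le _ n) (le_n n)). rewrite List.Forall_forall in Fa.
  apply Fa, (in_map (fun p => length (fst p))); auto.
Qed.


Lemma reduced_cons_inv a u : reduced v1 v2 (a :: u) ->
  letter_ok v1 v2 a /\ reduced v1 v2 u /\ (forall b, nth_error u 0 = Some b -> ~ same_side a b).
Proof.
  intros [Fa Hn]. inversion Fa; subst. repeat split; auto.
  - intros k x y E1 E2. apply (Hn (S k)); auto.
  - intros b E. apply (Hn 0%nat); auto.
Qed.

Lemma reduced_cons a u : letter_ok v1 v2 a -> reduced v1 v2 u ->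
  (forall b, nth_error u 0 = Some b -> ~ same_side a b) -> reduced v1 v2 (a :: u).
Proof.
  intros Ha [Fu Hu] Hh. split; [constructor; auto|].
  intros [|k] x y E1 E2; simpl in *.
  - injection E1 as <-. apply Hh; auto.
  - eapply Hu; eauto.
Qed.

Lemma reduced_app_r s u : reduced v1 v2 (s ++ u) -> reduced v1 v2 u.
Proof. induction s; simpl; auto. intro H. apply IHs, (reduced_cons_inv _ _ H). Qed.

Lemma reduced_no_head_left w u : reduced v1 v2 (inl w :: u) -> no_head_left u.
Proof.
  intro H. apply reduced_cons_inv in H as [_ [_ H]].
  destruct u as [|[b|b] u]; simpl; auto. apply (H (inl b)); simpl; auto.
Qed.

Lemma reduced_no_head_right z u : reduced v1 v2 (inr z :: u) -> no_head_right u.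
Proof.
  intro H. apply reduced_cons_inv in H as [_ [_ H]].
  destruct u as [|[b|b] u]; simpl; auto. apply (H (inr b)); simpl; auto.
Qed.

Definition lift_left (w : V1) (u : list letter) : list letter :=
  if classic_eq_dec w v1 then u else inl w :: u.
Definition lift_right (z : V2) (u : list letter) : list letter :=
  if classic_eq_dec z v2 then u else inr z :: u.

Lemma lift_left_root u : lift_left v1 u = u.
Proof. unfold lift_left. destruct (classic_eq_dec v1 v1); congruence. Qed.
Lemma lift_right_root u : lift_right v2 u = u.
Proof. unfold lift_right. destruct (classic_eq_dec v2 v2); congruence. Qed.

Lemma lift_left_letter w u : w <> v1 -> lift_left w u = inl w :: u.
Proof. unfold lift_left. destruct (classic_eq_dec w v1); congruence. Qed.
Lemma lift_right_letter z u : z <> v2 -> lift_right z u = inr z :: u.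
Proof. unfold lift_right. destruct (classic_eq_dec z v2); congruence. Qed.

Lemma prepend_left_lift w u x : prepend_left v1 w u x <-> x = lift_left w u.
Proof.
  unfold prepend_left, lift_left. destruct (classic_eq_dec w v1); intuition congruence.
Qed.
Lemma prepend_right_lift z u x : prepend_right v2 z u x <-> x = lift_right z u.
Proof.
  unfold prepend_right, lift_right. destruct (classic_eq_dec z v2); intuition congruence.
Qed.

Lemma lift_left_reduced w u : reduced v1 v2 u -> no_head_left u -> reduced v1 v2 (lift_left w u).
Proof.
  intros Ru Nu. unfold lift_left. destruct (classic_eq_dec w v1); auto.
  apply reduced_cons; auto. intros b E.
  destruct u as [|c u]; simpl in E; [discriminate|]. injection E as ->.
  destruct b; simpl in *; tauto.
Qed.
Lemma lift_right_reduced z u : reduced v1 v2 u -> no_head_right u -> reduced v1 v2 (lift_right z u).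
Proof.
  intros Ru Nu. unfold lift_right. destruct (classic_eq_dec z v2); auto.
  apply reduced_cons; auto. intros b E.
  destruct u as [|c u]; simpl in E; [discriminate|]. injection E as ->.
  destruct b; simpl in *; tauto.
Qed.

Lemma fp_adj_sym : symmetric_rel fp_edge.
Proof.
  intros x y [(w & w' & u & A & Ru & Nu & Px & Py)|(w & w' & u & A & Ru & Nu & Px & Py)].
  - left. exists w', w, u. auto.
  - right. exists w', w, u. auto.
Qed.

Definition fp_walk (x y : list letter) (n : nat) : Prop :=
  forall Hx Hy, walk fp_edge (exist _ x Hx) (exist _ y Hy) n.

Lemma fp_walk_refl x : fp_walk x x 0.
Proof. intros Hx Hy. rewrite (proof_irrelevance _ Hx Hy). constructor. Qed.

Lemma fp_walk_trans x y z n k :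
  reduced v1 v2 y -> fp_walk x y n -> fp_walk y z k -> fp_walk x z (n + k).
Proof. intros Hy Wxy Wyz Hx Hz. apply walk_app with (exist _ y Hy); auto. Qed.

Lemma fp_walk_sym x y n : fp_walk x y n -> fp_walk y x n.
Proof. intros W Hy Hx. apply walk_rev, W. apply fp_adj_sym. Qed.

Lemma fp_walk_lift_left w w' n u : walk adj1 w w' n -> reduced v1 v2 u -> no_head_left u ->
  fp_walk (lift_left w u) (lift_left w' u) n.
Proof.
  intros Wk Ru Nu. induction Wk as [x|x y z n A Wk IH]; [apply fp_walk_refl|]. intros Hx Hz.
  apply walk_cons with (exist _ (lift_left y u) (lift_left_reduced y u Ru Nu)); [|apply IH].
  left. exists x, y, u. rewrite !prepend_left_lift. auto.
Qed.
Lemma fp_walk_lift_right z z' n u : walk adj2 z z' n -> reduced v1 v2 u -> no_head_right u ->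
  fp_walk (lift_right z u) (lift_right z' u) n.
Proof.
  intros Wk Ru Nu. induction Wk as [x|x y z n A Wk IH]; [apply fp_walk_refl|]. intros Hx Hz.
  apply walk_cons with (exist _ (lift_right y u) (lift_right_reduced y u Ru Nu)); [|apply IH].
  right. exists x, y, u. rewrite !prepend_right_lift. auto.
Qed.

Lemma fp_walk_letter_root a u : reduced v1 v2 (a :: u) -> fp_walk (a :: u) u (letter_height a).
Proof.
  intro H. pose proof H as (Ok & Ru & _)%reduced_cons_inv. destruct a as [w|z]; simpl in Ok.
  - rewrite <- (lift_left_letter w u Ok). rewrite <- (lift_left_root u) at 2.
    apply fp_walk_lift_left, (reduced_no_head_left w); auto. apply gdist_walk; auto.
  - rewrite <- (lift_right_letter z u Ok). rewrite <- (lift_right_root u) at 2.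
    apply fp_walk_lift_right, (reduced_no_head_right z); auto. apply gdist_walk; auto.
Qed.

Lemma fp_walk_letter a b u : reduced v1 v2 (a :: u) -> reduced v1 v2 (b :: u) ->
  fp_walk (a :: u) (b :: u) (letter_dist a b).
Proof.
  intros Ha Hb.
  pose proof Ha as (Oka & Ru & _)%reduced_cons_inv. pose proof Hb as (Okb & _)%reduced_cons_inv.
  destruct a as [w|z], b as [w'|z']; simpl in Oka, Okb |- *.
  - rewrite <- (lift_left_letter w u Oka), <- (lift_left_letter w' u Okb).
    apply fp_walk_lift_left, (reduced_no_head_left w); auto. apply gdist_walk; auto.
  - apply fp_walk_trans with u; auto.
    + apply (fp_walk_letter_root (inl w)); auto.
    + apply fp_walk_sym, (fp_walk_letter_root (inr z')); auto.
  - apply fp_walk_trans with u; auto.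
    + apply (fp_walk_letter_root (inr z)); auto.
    + apply fp_walk_sym, (fp_walk_letter_root (inl w')); auto.
  - rewrite <- (lift_right_letter z u Oka), <- (lift_right_letter z' u Okb).
    apply fp_walk_lift_right, (reduced_no_head_right z); auto. apply gdist_walk; auto.
Qed.

Lemma fp_walk_descend s u : reduced v1 v2 (s ++ u) -> fp_walk (s ++ u) u (height s).
Proof.
  induction s as [|a s IH]; simpl; intro H; [apply fp_walk_refl|].
  assert (Hs : reduced v1 v2 (s ++ u)) by apply (reduced_cons_inv _ _ H).
  apply fp_walk_trans with (s ++ u); auto. apply fp_walk_letter_root; auto.
Qed.

(* Descend to the first letters where the two words differ, cross inside one
   factor, and climb back up. *)
Lemma fp_walk_word_dist t t' u : reduced v1 v2 (rev t ++ u) -> reduced v1 v2 (rev t' ++ u) ->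
  fp_walk (rev t ++ u) (rev t' ++ u) (word_dist t t').
Proof.
  revert t' u; induction t as [|a t IH]; intros [|b t'] u H H'.
  - apply fp_walk_refl.
  - change (rev [] ++ u) with u. change (word_dist [] (b :: t')) with (height (b :: t')).
    rewrite <- height_rev. apply fp_walk_sym, fp_walk_descend; auto.
  - change (rev [] ++ u) with u. rewrite word_dist_nil_r, <- height_rev.
    apply fp_walk_descend; auto.
  - simpl word_dist. simpl rev in *. rewrite <- !app_assoc in *. simpl in *.
    destruct (classic_eq_dec a b) as [<-|Nab]; [apply IH; auto|].
    assert (Ha := reduced_app_r _ _ H). assert (Hb := reduced_app_r _ _ H').
    rewrite <- (height_rev t), <- (height_rev t').
    apply fp_walk_trans with (b :: u); auto; [|apply fp_walk_sym, fp_walk_descend; auto].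
    rewrite Nat.add_comm. apply fp_walk_trans with (a :: u); auto.
    + apply fp_walk_descend; auto.
    + apply fp_walk_letter; auto.
Qed.

Lemma word_dist_lift_left w w' : word_dist (lift_left w []) (lift_left w' []) = d1 w w'.
Proof.
  unfold lift_left.
  destruct (classic_eq_dec w v1) as [->|], (classic_eq_dec w' v1) as [->|]; simpl;
    [| |lia|destruct (classic_eq_dec (inl w) (inl w')) as [E|]; [injection E as ->|]];
    rewrite ?gdist_refl, ?(gdist_sym sym1 conn1 v1); auto; simpl; lia.
Qed.
Lemma word_dist_lift_right z z' : word_dist (lift_right z []) (lift_right z' []) = d2 z z'.
Proof.
  unfold lift_right.
  destruct (classic_eq_dec z v2) as [->|], (classic_eq_dec z' v2) as [->|]; simpl;
    [| |lia|destruct (classic_eq_dec (inr z) (inr z')) as [E|]; [injection E as ->|]];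
    rewrite ?gdist_refl, ?(gdist_sym sym2 conn2 v2); auto; simpl; lia.
Qed.

Lemma rev_lift_left w u : rev (lift_left w u) = rev u ++ lift_left w [].
Proof.
  unfold lift_left. destruct (classic_eq_dec w v1); simpl; [rewrite app_nil_r|]; reflexivity.
Qed.
Lemma rev_lift_right z u : rev (lift_right z u) = rev u ++ lift_right z [].
Proof.
  unfold lift_right. destruct (classic_eq_dec z v2); simpl; [rewrite app_nil_r|]; reflexivity.
Qed.

Lemma word_dist_fp_edge x y :
  fp_edge x y -> (word_dist (rev (proj1_sig x)) (rev (proj1_sig y)) <= 1)%nat.
Proof.
  intros [(w & w' & u & A & _ & _ & Px & Py)|(w & w' & u & A & _ & _ & Px & Py)].
  - rewrite prepend_left_lift in Px, Py. rewrite Px, Py, !rev_lift_left, word_dist_app,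
      word_dist_lift_left. apply gdist_adj; auto.
  - rewrite prepend_right_lift in Px, Py. rewrite Px, Py, !rev_lift_right, word_dist_app,
      word_dist_lift_right. apply gdist_adj; auto.
Qed.

Lemma word_dist_le_walk x y n : walk fp_edge x y n ->
  (word_dist (rev (proj1_sig x)) (rev (proj1_sig y)) <= n)%nat.
Proof.
  induction 1 as [|x y z n A _ IH]; [rewrite word_dist_refl; lia|].
  pose proof (word_dist_fp_edge x y A).
  pose proof (word_dist_triangle (rev (proj1_sig x)) (rev (proj1_sig y)) (rev (proj1_sig z))). lia.
Qed.

Lemma walk_word_dist (x y : fp_vertex v1 v2) :
  walk fp_edge x y (word_dist (rev (proj1_sig x)) (rev (proj1_sig y))).
Proof.
  destruct x as [x Hx], y as [y Hy]. simpl.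
  pose proof (fp_walk_word_dist (rev x) (rev y) []) as W. rewrite !app_nil_r, !rev_involutive in W.
  apply W; auto.
Qed.

Lemma fp_connected : connected fp_edge.
Proof. intros x y. eexists. apply walk_word_dist. Qed.

Lemma fp_gdist x y : gdist fp_edge x y = word_dist (rev (proj1_sig x)) (rev (proj1_sig y)).
Proof. apply gdist_unique. split; [apply walk_word_dist|apply word_dist_le_walk]. Qed.

Lemma fp_path_metric_neg_def : neg_def_on (fun _ => True) (path_metric fp_edge).
Proof.
  replace (path_metric fp_edge) with
    (fun x y : fp_vertex v1 v2 => word_kernel (rev (proj1_sig x)) (rev (proj1_sig y))).
  - apply neg_def_on_comap with (P := List.Forall (letter_ok v1 v2)).
    + intros [x Hx] [y Hy] E. simpl in E. apply (f_equal (@rev _)) in E.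
      rewrite !rev_involutive in E. subst. f_equal. apply proof_irrelevance.
    + intros [x [Fx Hn]]. apply List.Forall_rev; auto.
    + apply word_kernel_neg_def.
  - apply functional_extensionality; intro x. apply functional_extensionality; intro y.
    rewrite path_metric_gdist, fp_gdist. reflexivity.
Qed.

End FreeProduct.

Theorem mainTheorem9 (V1 V2 : Type)
  (adj1 : V1 -> V1 -> Prop) (adj2 : V2 -> V2 -> Prop) (v1 : V1) (v2 : V2) :
  symmetric_rel adj1 -> symmetric_rel adj2 ->
  connected adj1 -> connected adj2 ->
  cond_strict_neg_def (path_metric adj1) ->
  cond_strict_neg_def (path_metric adj2) ->
  cond_strict_neg_def (path_metric (@fp_adj V1 V2 adj1 adj2 v1 v2)).
Proof.
  intros sym1 sym2 conn1 conn2 csnd1 csnd2.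
  apply neg_def_cond_strict_neg_def.
  - intros x y. rewrite !path_metric_gdist, (gdist_sym (fp_adj_sym _ _ _ _ v1 v2 sym1 sym2)
      (fp_connected _ _ _ _ v1 v2 sym1 sym2 conn1 conn2)). reflexivity.
  - apply fp_path_metric_neg_def; auto using cond_strict_neg_def_neg_def.
Qed.
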